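(* Let $n$ be a positive integer and $x\ge1$ real. Let $k$ be an integer in the range $$\min\{\Omega(d):d\in\mathcal{M}_x(n)\}\le k\le\max\{\Omega(d):d\in\mathcal{M}_x(n)\}$$ which is closest to $\Omega(n)/2$ among integers in this range. Then $|\mathcal{M}_x(n)|\le C_k(n)$.
   Context: $\Omega(n)$ is the number of prime factors of $n$ counted with multiplicity, and $C_k(n)$ is the number of positive divisors $d$ of $n$ with $\Omega(d)=k$. For $x\in\mathbb{R}$, a positive divisor $d$ of $n$ is maximal with respect to $x$ if $d\le x$ and there is no other positive divisor $d'$ of $n$ with $d'\le x$ and $d\mid d'$; $\mathcal{M}_x(n)$ denotes the set of such divisors. *)

From mathcomp Require Import all_boot all_order all_algebra.
From mathcomp Require Import reals.
Set Implicit Arguments. Unset Strict Implicit. Unset Printing Implicit Defensive.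
Import Order.TTheory GRing.Theory Num.Theory.

Definition bigOmega (n : nat) : nat := \sum_(p <- primes n) logn p n.

Definition Ck (k n : nat) : nat := count (fun d => bigOmega d == k) (divisors n).

(* M_x(n) : the divisors of n that are maximal w.r.t. x, as a list
   (without duplicates, since divisors n is uniq). *)
Definition maxdivs (R : realType) (x : R) (n : nat) : seq nat :=
  [seq d <- divisors n |
     ((d%:R <= x)%R &&
      all (fun d' => ~~ ((d'%:R <= x)%R && (d %| d') && (d' != d))) (divisors n))].

From mathcomp Require Import all_boot all_order all_algebra.
From mathcomp Require Import reals.
From mathcomp Require Import zify.
Import Order.TTheory.

Set Implicit Arguments.
Unset Strict Implicit.
Unset Printing Implicit Defensive.

(* The divisors of n, ordered by divisibility and graded by bigOmega, form a
   product of chains.  The bracket matching of de Bruijn, Tengbergen and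
   Kruyswijk gives an injection [raise] from the divisors d with
   2 Omega(d) < Omega(n) to the next rank, with d | raise d.  Iterating it
   carries a divisor of rank below k up to rank k, and, through the duality
   d |-> n/d, a divisor of rank above k down to rank k, always along a
   divisibility chain; two elements of an antichain with the same image would
   be comparable, so the antichain M_x(n) injects into the divisors of rank k.
   Taking k closest to Omega(n)/2 in the rank range of M_x(n) is exactly what
   makes every step admissible: 2k <= Omega(n) + 1 if some maximal divisor lies
   below k, and Omega(n) <= 2k + 1 if some lies above. *)

Lemma bigOmega_dvd n d : 0 < n -> d %| n ->
  bigOmega d = \sum_(p <- primes n) logn p d.
Proof.
move=> n_gt0 dvd_dn; rewrite /bigOmega [RHS](bigID (mem (primes d))) /=.
rewrite [X in _ + X]big1 ?addn0; last first.
  by move=> p /negPf; rewrite -logn_gt0 lt0n => /negbFE/eqP.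
rewrite -[RHS]big_filter; apply: perm_big; apply: uniq_perm; rewrite ?filter_uniq ?primes_uniq //.
move=> p; rewrite mem_filter andb_idr // !mem_primes => /and3P[-> _ dvd_pd].
by rewrite n_gt0 (dvdn_trans dvd_pd).
Qed.

Lemma bigOmegaM a b : 0 < a -> 0 < b -> bigOmega (a * b) = bigOmega a + bigOmega b.
Proof.
move=> a_gt0 b_gt0; have ab_gt0 : 0 < a * b by rewrite muln_gt0 a_gt0.
rewrite (bigOmega_dvd ab_gt0 (dvdn_mulr b (dvdnn a))).
rewrite (bigOmega_dvd ab_gt0 (dvdn_mull a (dvdnn b))) -big_split /=.
by rewrite /bigOmega; apply: eq_bigr => p _; rewrite lognM.
Qed.

Lemma bigOmega_prime p : prime p -> bigOmega p = 1.
Proof. by move=> p_pr; rewrite /bigOmega primes_prime // big_seq1 logn_prime ?eqxx. Qed.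

Lemma bigOmega_divn n d : 0 < n -> d %| n ->
  bigOmega (n %/ d) + bigOmega d = bigOmega n.
Proof.
move=> n_gt0 dvd_dn; have d_gt0 := dvdn_gt0 n_gt0 dvd_dn.
by rewrite -bigOmegaM ?divnK // divn_gt0 // dvdn_leq.
Qed.

Lemma divn_divnK n d : 0 < n -> d %| n -> n %/ (n %/ d) = d.
Proof. by move=> n_gt0 dvd_dn; rewrite divnA // mulKn. Qed.

Lemma dvdn_div2l n a b : 0 < n -> a %| n -> b %| n -> (n %/ a %| n %/ b) = (b %| a).
Proof.
move=> n_gt0 dvd_an dvd_bn.
have na_gt0 : 0 < n %/ a by rewrite divn_gt0 ?(dvdn_gt0 n_gt0) // dvdn_leq.
by rewrite dvdn_divRL // -{2}(divnK dvd_an) dvdn_pmul2l.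
Qed.

Section LastArgmin.
Variables (disp : Order.disp_t) (T : orderType disp) (f : nat -> T).

Fixpoint last_argmin r : nat :=
  if r is r'.+1 then
    let j := last_argmin r' in if (f r' <= f j)%O then r' else j
  else 0.

Lemma last_argminP r : 0 < r ->
  [/\ last_argmin r < r,
      forall t, t < r -> (f (last_argmin r) <= f t)%O
    & forall t, last_argmin r < t < r -> (f (last_argmin r) < f t)%O].
Proof.
elim: r => // r IH _ /=; set j := last_argmin r.
have [r0 | r_gt0] := posnP r.
  rewrite {}/j r0 /= lexx; split=> // t; first by rewrite ltnS leqn0 => /eqP->.
  by rewrite ltnNge andNb.
have [j_lt_r j_min j_last] := IH r_gt0.
case: ifPn => [le_rj | /negP/negP]; last rewrite -ltNge => lt_jr.
  split=> // [t|t]; last by rewrite ltnNge andNb.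
  by rewrite ltnS leq_eqVlt => /predU1P[-> // | /j_min]; apply: le_trans.
split=> [|t|t]; first exact: ltnW.
  by rewrite ltnS leq_eqVlt => /predU1P[-> | /j_min //]; apply: ltW.
move=> /andP[lt_jt]; rewrite ltnS leq_eqVlt => /predU1P[-> // | lt_tr].
by apply: j_last; rewrite lt_jt.
Qed.

End LastArgmin.

Lemma sum_bump (a1 a2 : nat -> nat) j1 j2 t :
    (forall l, l < t -> a1 l + (l == j1) = a2 l + (l == j2)) ->
  \sum_(0 <= l < t) a1 l + (j1 < t) = \sum_(0 <= l < t) a2 l + (j2 < t).
Proof.
elim: t => [|t IH] bump; first by rewrite !big_geq.
have := IH (fun l lt_lt => bump l (ltnW lt_lt)); have := bump t (ltnSn t).
rewrite !big_nat_recr //= !ltnS [j1 <= t]leq_eqVlt [j2 <= t]leq_eqVlt ![t == _]eq_sym.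
case: eqVneq => [-> | ]; case: eqVneq => [-> | ] /=; rewrite ?ltnn; lia.
Qed.

Section Levels.
Variable e : nat -> nat.

(* Read the exponent vector a <= e as the bracket word made of, for each index
   l in turn, a l closing brackets followed by e l - a l opening ones; then
   [level a j] is the height of the word just after the closing brackets of
   block j.  The first unmatched opening bracket lies in the last block of
   minimal level, and raising means closing it. *)
Definition level (a : nat -> nat) j : int :=
  ((\sum_(0 <= l < j) e l)%:Z - 2 * (\sum_(0 <= l < j) a l)%:Z - (a j)%:Z)%R.

Definition raise_index a r := last_argmin (level a) r.

Lemma levelS a j : level a j.+1 = (level a j + (e j)%:Z - (a j)%:Z - (a j.+1)%:Z)%R.
Proof. rewrite /level !big_nat_recr //=; lia. Qed.

Lemma level_bump a1 a2 j1 j2 : j1 < j2 ->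
    (forall l, l <= j2 -> a1 l + (l == j1) = a2 l + (l == j2)) ->
  level a2 j1 = (level a1 j1 - 1)%R /\ level a2 j2 = (level a1 j2 - 1)%R.
Proof.
move=> lt_j12 bump.
have sum_at t : t <= j2 ->
    \sum_(0 <= l < t) a1 l + (j1 < t) = \sum_(0 <= l < t) a2 l + (j2 < t).
  by move=> le_tj2; apply: sum_bump => l lt_lt; apply: bump; apply: ltnW (leq_trans _ le_tj2).
have := sum_at j1 (ltnW lt_j12); have := sum_at j2 (leqnn j2).
have := bump j1 (ltnW lt_j12); have := bump j2 (leqnn j2).
rewrite /level !eqxx (ltn_eqF lt_j12) (gtn_eqF lt_j12) lt_j12 !ltnn /=; lia.
Qed.

Lemma raise_index_not_full a r : 0 < r -> (forall l, l < r -> a l <= e l) ->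
    2 * \sum_(0 <= l < r) a l < \sum_(0 <= l < r) e l ->
  a (raise_index a r) < e (raise_index a r).
Proof.
move=> r_gt0 le_ae lt_sums; rewrite /raise_index.
have [lt_jr j_min j_last] := last_argminP (level a) r_gt0.
set j := last_argmin _ _ in lt_jr j_min j_last *.
rewrite ltn_neqAle le_ae // andbT; apply/eqP => eq_ae.
have [lt_j1r | ] := ltnP j.+1 r.
  have := j_last j.+1; rewrite ltnSn lt_j1r levelS => /(_ isT); lia.
move=> le_rj1; have r_eq : r = j.+1 by apply/eqP; rewrite eqn_leq le_rj1 lt_jr.
have := j_min 0 r_gt0; rewrite [level a 0]/level !big_geq //.
by move: lt_sums; rewrite r_eq !big_nat_recr //= /level; lia.
Qed.

Lemma raise_index_inj a1 a2 r : 0 < r ->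
    (forall l, l < r -> a1 l + (l == raise_index a1 r) = a2 l + (l == raise_index a2 r)) ->
  raise_index a1 r = raise_index a2 r.
Proof.
move=> r_gt0; wlog le_j12 : a1 a2 / raise_index a1 r <= raise_index a2 r => [sym bump|].
  have [/sym -> // | /ltnW /sym le_j21] := leqP (raise_index a1 r) (raise_index a2 r).
  by rewrite le_j21 // => l /bump ->.
move=> bump; apply/eqP; rewrite eqn_leq le_j12 leqNgt; apply/negP => lt_j12.
have [lt_j2r j2_min _] := last_argminP (level a2) r_gt0.
have [_ _ j1_last] := last_argminP (level a1) r_gt0.
(* Moving the bump from J1 to J2 lowers both levels by one, so the strict
   inequality level a1 J1 < level a1 J2 survives for a2, against the
   minimality of J2. *)
have [level_j1 level_j2] : level a2 (raise_index a1 r) = (level a1 (raise_index a1 r) - 1)%R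
    /\ level a2 (raise_index a2 r) = (level a1 (raise_index a2 r) - 1)%R.
  by apply: level_bump => // l le_lj2; apply: bump; apply: leq_ltn_trans lt_j2r.
have := j1_last (raise_index a2 r); rewrite lt_j12 lt_j2r => /(_ isT).
have := j2_min (raise_index a1 r) (ltn_trans lt_j12 lt_j2r).
rewrite /raise_index in level_j1 level_j2 *; rewrite level_j1 level_j2; lia.
Qed.

End Levels.

Definition expo n d j := logn (nth 0 (primes n) j) d.

Definition raise n d :=
  d * nth 0 (primes n) (raise_index (expo n n) (expo n d) (size (primes n))).

Section Raise.
Variable n : nat.
Hypothesis n_gt0 : 0 < n.

Local Notation r := (size (primes n)).
Local Notation p j := (nth 0 (primes n) j).
Local Notation J d := (raise_index (expo n n) (expo n d) r).

Lemma prime_nth_primes j : j < r -> prime (p j).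
Proof. by move=> lt_jr; have := mem_nth 0 lt_jr; rewrite mem_primes => /andP[]. Qed.

Lemma bigOmega_expo d : d %| n -> bigOmega d = \sum_(0 <= j < r) expo n d j.
Proof. by move=> dvd_dn; rewrite (bigOmega_dvd n_gt0 dvd_dn) (big_nth 0). Qed.

Lemma expo_mul_prime d i j : 0 < d -> i < r -> j < r ->
  expo n (d * p i) j = expo n d j + (j == i).
Proof.
move=> d_gt0 lt_ir lt_jr; have p_pr := prime_nth_primes lt_ir.
by rewrite /expo (lognM _ d_gt0 (prime_gt0 p_pr)) (logn_prime _ p_pr) nth_uniq ?primes_uniq.
Qed.

Lemma raise_indexP d : d %| n -> 2 * bigOmega d < bigOmega n ->
  J d < r /\ expo n d (J d) < expo n n (J d).
Proof.
move=> dvd_dn lt_Omega.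
have r_gt0 : 0 < r.
  rewrite lt0n size_eq0; apply: contraTneq lt_Omega => primes_nil.
  by rewrite /bigOmega primes_nil big_nil.
have [lt_Jr _ _] := last_argminP (level (expo n n) (expo n d)) r_gt0.
split=> //; apply: raise_index_not_full => // [l _|]; first exact: dvdn_leq_log.
by rewrite -!bigOmega_expo.
Qed.

Lemma raiseP d : d %| n -> 2 * bigOmega d < bigOmega n ->
  [/\ raise n d %| n, bigOmega (raise n d) = (bigOmega d).+1 & d %| raise n d].
Proof.
move=> dvd_dn lt_Omega; have [lt_Jr room] := raise_indexP dvd_dn lt_Omega.
have p_pr := prime_nth_primes lt_Jr; have d_gt0 := dvdn_gt0 n_gt0 dvd_dn.
split; last exact: dvdn_mulr.
  rewrite /raise mulnC -dvdn_divRL // -(expn1 (p _)) pfactor_dvdn //; last first.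
    by rewrite divn_gt0 // dvdn_leq.
  by rewrite logn_div // subn_gt0.
by rewrite /raise (bigOmegaM d_gt0 (prime_gt0 p_pr)) (bigOmega_prime p_pr) addn1.
Qed.

Lemma raise_inj d1 d2 : d1 %| n -> d2 %| n ->
    2 * bigOmega d1 < bigOmega n -> 2 * bigOmega d2 < bigOmega n ->
  raise n d1 = raise n d2 -> d1 = d2.
Proof.
move=> dvd_d1n dvd_d2n lt_Omega1 lt_Omega2 eq_raise.
have [lt_J1r _] := raise_indexP dvd_d1n lt_Omega1.
have [lt_J2r _] := raise_indexP dvd_d2n lt_Omega2.
have d1_gt0 := dvdn_gt0 n_gt0 dvd_d1n; have d2_gt0 := dvdn_gt0 n_gt0 dvd_d2n.
have eq_J : J d1 = J d2.
  apply: raise_index_inj => [|l lt_lr]; first exact: leq_ltn_trans lt_J1r.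
  by rewrite -!expo_mul_prime // -/(raise n d1) eq_raise.
apply/eqP; rewrite -(eqn_pmul2r (prime_gt0 (prime_nth_primes lt_J1r))).
by rewrite [in X in _ == X]eq_J -/(raise n d1) eq_raise.
Qed.

Lemma iter_raiseP m d : d %| n ->
    (forall j, bigOmega d <= j < bigOmega d + m -> 2 * j < bigOmega n) ->
  [/\ iter m (raise n) d %| n, bigOmega (iter m (raise n) d) = bigOmega d + m
    & d %| iter m (raise n) d].
Proof.
move=> dvd_dn; elim: m => [|m IH] room; first by rewrite addn0 dvdnn.
have [dvd_n Omega_m dvd_d] : [/\ iter m (raise n) d %| n,
    bigOmega (iter m (raise n) d) = bigOmega d + m & d %| iter m (raise n) d].
  by apply: IH => j le_j; apply: room; lia.
have [|dvd_raise_n -> dvd_raise] := raiseP dvd_n; first by rewrite Omega_m room //; lia.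
by rewrite Omega_m addnS (dvdn_trans dvd_d).
Qed.

Lemma iter_raise_inj m d1 d2 : d1 %| n -> d2 %| n -> bigOmega d1 = bigOmega d2 ->
    (forall j, bigOmega d1 <= j < bigOmega d1 + m -> 2 * j < bigOmega n) ->
  iter m (raise n) d1 = iter m (raise n) d2 -> d1 = d2.
Proof.
move=> dvd_d1n dvd_d2n eq_Omega; elim: m => [|m IH] room //=.
have room_m j : bigOmega d1 <= j < bigOmega d1 + m -> 2 * j < bigOmega n.
  by move=> le_j; apply: room; lia.
have [dvd1 Omega1 _] := iter_raiseP dvd_d1n room_m.
have [|dvd2 Omega2 _] := iter_raiseP (m := m) dvd_d2n; first by rewrite -eq_Omega.
move/raise_inj => eq_iter; apply: IH => //; apply: eq_iter => //.
  by rewrite Omega1 room //; lia.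
by rewrite Omega2 -eq_Omega room //; lia.
Qed.

Definition raise_to k d := iter (k - bigOmega d) (raise n) d.

Lemma raise_toP k d : d %| n -> bigOmega d <= k ->
    (bigOmega d < k -> 2 * k <= (bigOmega n).+1) ->
  [/\ raise_to k d %| n, bigOmega (raise_to k d) = k & d %| raise_to k d].
Proof.
move=> dvd_dn le_dk room; have [|dvd_n -> dvd_d] := iter_raiseP (m := k - bigOmega d) dvd_dn.
  by move=> j le_j; have := room; lia.
by rewrite subnKC.
Qed.

Lemma raise_to_eq_dvd k a b : a %| n -> b %| n -> bigOmega a <= bigOmega b <= k ->
    (bigOmega a < k -> 2 * k <= (bigOmega n).+1) ->
  raise_to k a = raise_to k b -> a %| b.
Proof.
move=> dvd_an dvd_bn /andP[le_ab le_bk] room.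
have room_j j : bigOmega a <= j < k -> 2 * j < bigOmega n by have := room; lia.
set c := iter (bigOmega b - bigOmega a) (raise n) a.
have [|dvd_cn Omega_c dvd_ac] := iter_raiseP (m := bigOmega b - bigOmega a) dvd_an.
  by move=> j le_j; apply: room_j; lia.
rewrite subnKC // -/c in Omega_c dvd_cn dvd_ac.
move=> eq_raise; suff <- : c = b by [].
apply: (iter_raise_inj (m := k - bigOmega b)) => //; last first.
  by rewrite -iterD addnBA // subnK // -eq_raise.
move=> j; rewrite Omega_c subnKC // => /andP[le_bj lt_jk].
by apply: room_j; rewrite lt_jk (leq_trans le_ab le_bj).
Qed.

Definition lower_to k d := n %/ raise_to (bigOmega n - k) (n %/ d).

Lemma raise_to_complementP k d : d %| n -> k <= bigOmega d ->
    (k < bigOmega d -> bigOmega n <= (2 * k).+1) ->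
  [/\ raise_to (bigOmega n - k) (n %/ d) %| n,
      bigOmega (raise_to (bigOmega n - k) (n %/ d)) = bigOmega n - k
    & n %/ d %| raise_to (bigOmega n - k) (n %/ d)].
Proof.
move=> dvd_dn le_kd room; have Omega_nd := bigOmega_divn n_gt0 dvd_dn.
by apply: raise_toP; rewrite ?dvdn_div //; lia.
Qed.

Lemma lower_toP k d : d %| n -> k <= bigOmega d ->
    (k < bigOmega d -> bigOmega n <= (2 * k).+1) ->
  [/\ lower_to k d %| n, bigOmega (lower_to k d) = k & lower_to k d %| d].
Proof.
move=> dvd_dn le_kd room.
have [dvd_un Omega_u dvd_ndu] := raise_to_complementP dvd_dn le_kd room.
have le_kn : k <= bigOmega n.
  by rewrite -(bigOmega_divn n_gt0 dvd_dn) (leq_trans le_kd) ?leq_addl.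
split; first exact: dvdn_div.
  apply/eqP; rewrite -(eqn_add2r (bigOmega n - k)) -{1}Omega_u bigOmega_divn //.
  by rewrite subnKC.
by rewrite -{2}(divn_divnK n_gt0 dvd_dn) dvdn_div2l ?dvdn_div.
Qed.

Lemma lower_to_eq_dvd k a b : a %| n -> b %| n -> k <= bigOmega a <= bigOmega b ->
    (k < bigOmega b -> bigOmega n <= (2 * k).+1) ->
  lower_to k a = lower_to k b -> a %| b.
Proof.
move=> dvd_an dvd_bn /andP[le_ka le_ab] room eq_lower.
have [dvd_ua _ _] := raise_to_complementP dvd_an le_ka (fun lt_ka => room (leq_trans lt_ka le_ab)).
have [dvd_ub _ _] := raise_to_complementP dvd_bn (leq_trans le_ka le_ab) room.
rewrite -(dvdn_div2l n_gt0 dvd_bn dvd_an).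
have Omega_na := bigOmega_divn n_gt0 dvd_an; have Omega_nb := bigOmega_divn n_gt0 dvd_bn.
apply: (raise_to_eq_dvd (k := bigOmega n - k)); rewrite ?dvdn_div //.
- by move: Omega_nb Omega_na le_ka le_ab; clear; lia.
- by move: Omega_nb Omega_na le_ka le_ab room; clear; lia.
by move/(congr1 (divn n)): eq_lower; rewrite /lower_to !divn_divnK.
Qed.

Section ToRank.
Variables lo hi k : nat.
Hypothesis below_k : lo < k -> 2 * k <= (bigOmega n).+1.
Hypothesis above_k : k < hi -> bigOmega n <= (2 * k).+1.

Definition to_rank d := if bigOmega d <= k then raise_to k d else lower_to k d.

Lemma to_rankP d : d %| n -> lo <= bigOmega d <= hi ->
  to_rank d %| n /\ bigOmega (to_rank d) = k.
Proof.
move=> dvd_dn /andP[le_lo le_hi]; rewrite /to_rank; case: leqP => [le_dk | lt_kd].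
  have [|-> -> _] // := raise_toP dvd_dn le_dk.
  by move=> lt_dk; apply: below_k; apply: leq_ltn_trans le_lo lt_dk.
have [|-> -> _] // := lower_toP dvd_dn (ltnW lt_kd).
by move=> _; apply: above_k; apply: leq_trans lt_kd le_hi.
Qed.

Lemma to_rank_eq_dvd a b : a %| n -> b %| n ->
    lo <= bigOmega a <= bigOmega b -> bigOmega b <= hi ->
  to_rank a = to_rank b -> a %| b.
Proof.
move=> dvd_an dvd_bn /andP[le_lo le_ab] le_hi; rewrite /to_rank.
have room_a : bigOmega a < k -> 2 * k <= (bigOmega n).+1.
  by move=> lt_ak; apply: below_k; apply: leq_ltn_trans le_lo lt_ak.
have room_b : k < bigOmega b -> bigOmega n <= (2 * k).+1.
  by move=> lt_kb; apply: above_k; apply: leq_trans lt_kb le_hi.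
have [le_bk | lt_kb] := leqP (bigOmega b) k.
  by rewrite (leq_trans le_ab le_bk); apply: raise_to_eq_dvd; rewrite ?le_ab.
have [le_ak eq_rank | lt_ka] := leqP (bigOmega a) k; last first.
  by apply: lower_to_eq_dvd; rewrite ?(ltnW lt_ka).
have [_ _ dvd_a] := raise_toP dvd_an le_ak room_a.
have [_ _ dvd_b] := lower_toP dvd_bn (ltnW lt_kb) room_b.
by rewrite (dvdn_trans dvd_a) // eq_rank.
Qed.

Lemma antichain_size_leq_Ck (A : seq nat) : uniq A -> {in A, forall d, d %| n} ->
    {in A &, forall a b, a %| b -> a = b} -> {in A, forall d, lo <= bigOmega d <= hi} ->
  size A <= Ck k n.
Proof.
move=> uniqA dvdA antiA rangeA.
have eq_rank_dvd a b : a \in A -> b \in A -> bigOmega a <= bigOmega b ->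
    to_rank a = to_rank b -> a %| b.
  move=> aA bA le_ab; have /andP[le_lo _] := rangeA a aA; have /andP[_ le_hi] := rangeA b bA.
  by apply: to_rank_eq_dvd; rewrite ?dvdA ?le_lo.
have to_rank_inj : {in A &, injective to_rank}.
  move=> a b aA bA eq_rank; have [le_ab | /ltnW le_ba] := leqP (bigOmega a) (bigOmega b).
    by apply: antiA; rewrite ?eq_rank_dvd.
  by apply/esym/antiA; rewrite ?eq_rank_dvd.
rewrite /Ck -size_filter -(size_map to_rank A).
apply: uniq_leq_size; first by rewrite map_inj_in_uniq.
move=> _ /mapP[d dA ->]; rewrite mem_filter -dvdn_divisors //.
by have [-> ->] := to_rankP (dvdA d dA) (rangeA d dA); rewrite eqxx.
Qed.

End ToRank.
End Raise.

Lemma maxdivs_uniq (R : realType) (x : R) n : uniq (maxdivs x n).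
Proof. exact/filter_uniq/divisors_uniq. Qed.

Lemma maxdivs_dvd (R : realType) (x : R) n : 0 < n -> {in maxdivs x n, forall d, d %| n}.
Proof. by move=> n_gt0 d; rewrite mem_filter dvdn_divisors // => /andP[]. Qed.

Lemma maxdivs_antichain (R : realType) (x : R) n :
  {in maxdivs x n &, forall a b, a %| b -> a = b}.
Proof.
move=> a b; rewrite !mem_filter => /andP[/andP[_ /allP maximal_a] _].
move=> /andP[/andP[le_bx _] b_div] dvd_ab.
by apply/eqP; have := maximal_a b b_div; rewrite le_bx dvd_ab negbK eq_sym.
Qed.

Lemma bigminn_leq (s : seq nat) h y : y \in s -> \big[minn/h]_(j <- s) j <= y.
Proof.
elim: s => // z s IH; rewrite inE big_cons => /predU1P[-> | ys]; first exact: geq_minl.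
exact: leq_trans (geq_minr _ _) (IH ys).
Qed.

Lemma dist_half_pred k m : 0 < k ->
  (`|(2 * k)%:Z - m%:Z| <= `|(2 * k.-1)%:Z - m%:Z|)%R -> 2 * k <= m.+1.
Proof. lia. Qed.

Lemma dist_half_succ k m : (`|(2 * k)%:Z - m%:Z| <= `|(2 * k.+1)%:Z - m%:Z|)%R ->
  m <= (2 * k).+1.
Proof. lia. Qed.

Unset Implicit Arguments.

Theorem lemma3p18 (R : realType) (n : nat) (x : R) (k : nat) :
  (0 < n)%N -> (1 <= x)%R ->
  let Om := [seq bigOmega d | d <- maxdivs x n] in
  let hi := \max_(j <- Om) j in
  let lo := \big[minn/hi]_(j <- Om) j in
  (lo <= k <= hi)%N ->
  (forall j : nat, (lo <= j <= hi)%N ->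
     (`|(2 * k)%:Z - (bigOmega n)%:Z| <= `|(2 * j)%:Z - (bigOmega n)%:Z|)%R) ->
  (size (maxdivs x n) <= Ck k n)%N.
Proof.
(* x >= 1 only makes M_x(n) nonempty; the bound does not need it. *)
move=> n_gt0 _ Om hi lo /andP[le_lo_k le_k_hi] closest.
apply: (antichain_size_leq_Ck n_gt0 (lo := lo) (hi := hi)).
- move=> lt_lo_k; have k_gt0 := leq_ltn_trans (leq0n lo) lt_lo_k.
  apply: dist_half_pred k_gt0 _; apply: closest.
  by rewrite (leq_trans (leq_pred k)) // andbT; case: (k) lt_lo_k.
- move=> lt_k_hi; apply: dist_half_succ; apply: closest.
  by rewrite lt_k_hi (leq_trans le_lo_k).
- exact: maxdivs_uniq.
- exact: maxdivs_dvd.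
- exact: maxdivs_antichain.
move=> d d_max; have Om_d : bigOmega d \in Om by apply: map_f.
by rewrite bigminn_leq //= /hi (leq_bigmax_seq _ Om_d).
Qed.
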